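(* Let $\mathfrak{g}$ be a nonzero finite-dimensional complex solvable Lie algebra. Then $\mathfrak{g}$ admits a non-trivial CPA-structure.
   Context: A CPA-structure on a Lie algebra $\mathfrak{g}$ is a bilinear product $x\cdot y$ on $\mathfrak{g}$ satisfying, for all $x,y,z$: $x\cdot y=y\cdot x$; $[x,y]\cdot z=x\cdot(y\cdot z)-y\cdot(x\cdot z)$; $x\cdot[y,z]=[x\cdot y,z]+[y,x\cdot z]$. It is non-trivial if $x\cdot y\neq0$ for some $x,y$. *)

From HB Require Import structures.
From mathcomp Require Import all_boot all_order all_algebra.
From mathcomp Require Import reals complex.
Set Implicit Arguments. Unset Strict Implicit. Unset Printing Implicit Defensive.
Import GRing.Theory.
Local Open Scope ring_scope.

Definition bilinear_op (F : fieldType) (V : vectType F) (m : V -> V -> V) : Prop :=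
  (forall (a : F) (x y z : V), m (a *: x + y) z = a *: m x z + m y z) /\
  (forall (a : F) (x y z : V), m x (a *: y + z) = a *: m x y + m x z).

Definition lie_bracket (F : fieldType) (V : vectType F) (br : V -> V -> V) : Prop :=
  [/\ bilinear_op br,
      (forall x : V, br x x = 0) &
      (forall x y z : V, br x (br y z) + br y (br z x) + br z (br x y) = 0)].

(* Derived subalgebra [U,U] of a subspace U: the span of all brackets [u,v]
   with u, v in U.  By bilinearity this is the span of the brackets of the
   basis vectors of U. *)
Definition derived_sub (F : fieldType) (V : vectType F) (br : V -> V -> V)
  (U : {vspace V}) : {vspace V} :=
  <<[seq br u v | u <- vbasis U, v <- vbasis U]>>%VS.

Definition derived_series (F : fieldType) (V : vectType F) (br : V -> V -> V)
  (k : nat) : {vspace V} := iter k (derived_sub br) fullv.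

Definition solvable_lie (F : fieldType) (V : vectType F) (br : V -> V -> V) : Prop :=
  exists k : nat, derived_series br k = 0%VS.

Definition CPA_structure (F : fieldType) (V : vectType F) (br : V -> V -> V)
  (p : V -> V -> V) : Prop :=
  [/\ bilinear_op p,
      (forall x y : V, p x y = p y x),
      (forall x y z : V, p (br x y) z = p x (p y z) - p y (p x z)) &
      (forall x y z : V, p x (br y z) = br (p x y) z + br y (p x z))].

Definition nontrivial_product (F : fieldType) (V : vectType F) (p : V -> V -> V) : Prop :=
  exists x y : V, p x y != 0.

(* By Lie's theorem, applied to the adjoint representation, a solvable complex
   Lie algebra g has a common eigenvector z of all ad x: [x, z] = lam x z for a
   linear form lam, which vanishes on [g, g] by the Jacobi identity.  If
   lam <> 0, then x . y = lam x lam y z is a CPA-structure; if lam = 0, then z is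
   central and x . y = phi x phi y z is one for any nonzero linear form phi
   vanishing on [g, g], which exists because [g, g] <> g.
   Lie's theorem is proved by induction on the dimension, passing to a
   codimension-one ideal N containing [U, U].  The weight space of a weight lam
   of N is stable under U by the invariance lemma: on the space spanned by
   w, w X, w X^2, ... (w a weight vector, X = rho x) the trace of
   rho [y, x] = [X, rho y] is both 0 and lam [y, x] times the dimension. *)

From HB Require Import structures.
From mathcomp Require Import all_boot all_order all_algebra.
From mathcomp Require Import reals complex.
From mathcomp Require Import ring.
From Stdlib Require Import Classical.
Import VectorInternalTheory.
Set Implicit Arguments. Unset Strict Implicit. Unset Printing Implicit Defensive.
Import GRing.Theory Num.Theory.
Local Open Scope ring_scope.

Lemma linear_sumZ (R : pzRingType) (U : lmodType R) (W : zmodType)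
    (s : GRing.Scale.law R W) (f : U -> W) :
  linear_for s f -> forall I (r : seq I) (P : pred I) (c : I -> R) (g : I -> U),
  f (\sum_(i <- r | P i) c i *: g i) = \sum_(i <- r | P i) s (c i) (f (g i)).
Proof.
move=> fL I r P c g.
pose fl : {linear U -> W | s} := HB.pack f (GRing.isLinear.Build _ _ _ _ f fL).
transitivity (\sum_(i <- r | P i) fl (c i *: g i)); first exact: (linear_sum fl).
by apply: eq_bigr => i _; exact: linearZ_LR.
Qed.

Section Bilinear.
Variables (F : fieldType) (V : vectType F) (m : V -> V -> V).
Hypothesis m_bilin : bilinear_op m.

Lemma bilin_linearl z : linear (m ^~ z).
Proof. by move=> a x y; case: m_bilin => ->. Qed.

Lemma bilin_linearr x : linear (m x).
Proof. by move=> a y z; case: m_bilin => _ ->. Qed.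

Lemma bilinDl x y z : m (x + y) z = m x z + m y z.
Proof. exact: (GRing.semilinear_linear (bilin_linearl z)).2. Qed.

Lemma bilinDr x y z : m x (y + z) = m x y + m x z.
Proof. exact: (GRing.semilinear_linear (bilin_linearr x)).2. Qed.

Lemma bilinZl a x z : m (a *: x) z = a *: m x z.
Proof. exact: (GRing.scalable_linear (bilin_linearl z)). Qed.

Lemma bilinZr a x z : m z (a *: x) = a *: m z x.
Proof. exact: (GRing.scalable_linear (bilin_linearr z)). Qed.

Lemma bilinNr x z : m z (- x) = - m z x.
Proof. by rewrite -scaleN1r bilinZr scaleN1r. Qed.

End Bilinear.

Section LieAlgebra.
Variables (F : fieldType) (V : vectType F) (br : V -> V -> V).
Hypothesis br_lie : lie_bracket br.

Lemma lie_bilin : bilinear_op br. Proof. by case: br_lie. Qed.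

Lemma lie_anti x y : br x y = - br y x.
Proof.
case: br_lie => bl alt _; have := alt (x + y).
rewrite (bilinDl bl) !(bilinDr bl) !alt add0r addr0 => /eqP.
by rewrite addr_eq0 => /eqP.
Qed.

Lemma lie_jacobi x y v : br (br x y) v = br x (br y v) - br y (br x v).
Proof.
case: br_lie => bl _ jac.
have jv : br v (br x y) = - (br x (br y v) + br y (br v x)).
  by apply/eqP; rewrite -addr_eq0 addrC jac.
by rewrite lie_anti jv opprK [br v x]lie_anti (bilinNr bl).
Qed.

End LieAlgebra.

Section DerivedSubalgebra.
Variables (F : fieldType) (V : vectType F) (br : V -> V -> V).
Hypothesis br_bilin : bilinear_op br.

Lemma mem_derived_sub (U : {vspace V}) u v :
  u \in U -> v \in U -> br u v \in derived_sub br U.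
Proof.
move=> uU vU; rewrite (coord_vbasis uU) (linear_sumZ (bilin_linearl br_bilin v)).
apply: rpred_sum => i _; apply: rpredZ.
rewrite (coord_vbasis vU) (linear_sumZ (bilin_linearr br_bilin _)).
apply: rpred_sum => j _; apply/rpredZ/memv_span/allpairs_f; by rewrite mem_nth ?size_tuple.
Qed.

Lemma derived_sub_min (U S : {vspace V}) :
  {in U &, forall u v, br u v \in S} -> (derived_sub br U <= S)%VS.
Proof.
move=> brS; apply/span_subvP => _ /allpairsP [[u v] [/= uU vU ->]].
by apply: brS; apply: vbasis_mem.
Qed.

Lemma derived_subS (U1 U2 : {vspace V}) :
  (U1 <= U2)%VS -> (derived_sub br U1 <= derived_sub br U2)%VS.
Proof.
move/subvP=> U12; apply: derived_sub_min => u v uU vU.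
by apply: mem_derived_sub; apply: U12.
Qed.

Lemma iter_derived_subS j (U1 U2 : {vspace V}) : (U1 <= U2)%VS ->
  (iter j (derived_sub br) U1 <= iter j (derived_sub br) U2)%VS.
Proof. by move=> U12; elim: j => //= j; apply: derived_subS. Qed.

Lemma derived_sub_proper (U : {vspace V}) j :
  iter j (derived_sub br) U = 0%VS -> U != 0%VS -> ~~ (U <= derived_sub br U)%VS.
Proof.
move=> solU; apply: contraNN => UD; rewrite -subv0 -solU.
elim: j {solU} => //= j IH; exact: subv_trans UD (derived_subS IH).
Qed.

End DerivedSubalgebra.

Section VectorSpace.
Variables (F : fieldType) (V : vectType F).

Lemma exists_hyperplane (D U : {vspace V}) e :
  (D <= U)%VS -> e \in U -> e \notin D ->
  exists N : {vspace V}, [/\ (D <= N)%VS, (N <= U)%VS, e \notin N & (U <= N + <[e]>)%VS].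
Proof.
move=> DU eU eD; set C := (U :\: (D + <[e]>))%VS.
exists (D + C)%VS; split; first exact: addvSl.
- by rewrite subv_add DU diffvSl.
- apply/memv_addP => -[d dD [c cC ed]].
  have : c \in (C :&: (D + <[e]>))%VS.
    by rewrite memv_cap cC /= -[c](addKr d) -ed memv_add ?memv_line ?rpredN.
  rewrite capv_diff memv0 => /eqP c0.
  by move: eD; rewrite ed c0 addr0 dD.
rewrite -{1}(addv_diff_cap U (D + <[e]>)) subv_add.
rewrite (subv_trans (addvSr D C) (addvSl _ _)) /=.
by rewrite (subv_trans (capvSr _ _)) // addvS ?addvSl.
Qed.

Lemma exists_linear_form (D : {vspace V}) e : e \notin D ->
  exists phi : V -> F, [/\ scalar phi, {in D, forall x, phi x = 0} & phi e != 0].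
Proof.
move=> eD; pose g (v : V) := v - projv D v.
have gL : linear g by move=> a u v; rewrite /g linearP scalerBr opprD addrACA.
have /rV0Pn [j gej] : v2r (g e) != 0.
  apply: contra eD; rewrite raddf_eq0; last exact: v2r_inj.
  rewrite subr_eq0 => /eqP ->; exact: memv_proj.
exists (fun v => v2r (g v) 0 j); split => //.
- by move=> a u v; rewrite gL linearP !mxE.
- by move=> x xD; rewrite /g projv_id // subrr linear0 mxE.
Qed.

End VectorSpace.

Lemma eigenvector_expmx (F : fieldType) n (A : 'M[F]_n) (v : 'rV_n) a k :
  v *m A = a *: v -> v *m A ^+ k = a ^+ k *: v.
Proof.
move=> vA; elim: k => [|k IH]; first by rewrite !expr0 scale1r mulmx1.
by rewrite exprSr -mulmxE mulmxA IH -scalemxAl vA scalerA -exprSr.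
Qed.

(* All eigenvalues vanish, so the characteristic polynomial is 'X^n. *)
Lemma mxtrace_nilpotent (F : closedFieldType) n (A : 'M[F]_n) k :
  A ^+ k = 0 -> \tr A = 0.
Proof.
case: n A => [|n] A Ak0; first by rewrite /mxtrace big_ord0.
have root0 a : root (char_poly A) a -> a = 0.
  rewrite -eigenvalue_root_char => /eigenvalueP [v vA vnz].
  have /eqP := eigenvector_expmx k vA; rewrite Ak0 mulmx0 eq_sym scaler_eq0.
  by rewrite (negbTE vnz) orbF expf_eq0 => /andP[_ /eqP].
have [rs charA] := closed_field_poly_normal (char_poly A).
rewrite (monicP (char_poly_monic A)) scale1r in charA.
have charXn : char_poly A = 'X^(size rs).
  rewrite charA (eq_big_seq (fun _ => 'X)) => [|a ars].
    by rewrite big_const_seq count_predT iter_mulr_1.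
  by rewrite (root0 a) ?subr0 // charA root_prod_XsubC.
have := size_char_poly A; rewrite charXn size_polyXn => -[size_rs].
have := char_poly_trace A (ltn0Sn n); rewrite charXn coefXn size_rs /=.
by rewrite eqn_leq ltnn andbF => /eqP; rewrite eq_sym oppr_eq0 => /eqP.
Qed.

Lemma stablemx_eigenvector (F : closedFieldType) n (W A : 'M[F]_n) :
  W != 0 -> stablemx W A ->
  exists v : 'rV_n, [/\ v != 0, (v <= W)%MS & exists a, v *m A = a *: v].
Proof.
move=> Wnz WA; set B := row_base W.
have BA : stablemx B A by rewrite stablemx_row_base.
have : size (char_poly (conjmx B A)) != 1%N by rewrite size_char_poly eqSS mxrank_eq0.
case/closed_rootP => a; rewrite -eigenvalue_root_char => /eigenvalueP [u uA unz].
exists (u *m B); split; first by rewrite mulmx_free_eq0 ?row_base_free.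
  by rewrite (submx_trans (submxMl _ _)) ?eq_row_base.
exists a; rewrite -mulmxA -[B *m A](mulmxKpV BA) mulmxA.
by rewrite -(mulmxA u) (mulmxA u) uA -scalemxAl.
Qed.

Lemma conjmx_expmx (F : fieldType) m n (B : 'M[F]_(m, n)) (A : 'M_n) k :
  row_free B -> stablemx B A -> conjmx B A ^+ k = conjmx B (A ^+ k).
Proof.
move=> freeB BA; have BAj j : stablemx B (A ^+ j).
  by elim: j => [|j IHj]; [rewrite expr0 stablemxC | rewrite exprS; apply: stablemxM].
elim: k => [|k IH]; first by rewrite !expr0 conjmx_scalar.
rewrite [in LHS]exprS [A ^+ _]exprS IH; apply/esym/conjmxM; by rewrite inE.
Qed.

Lemma horner_mx_sum (F : comNzRingType) m (A : 'M[F]_m.+1) (p : {poly F}) :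
  horner_mx A p = \sum_(i < size p) p`_i *: A ^+ i.
Proof.
rewrite -{1}[p]coefK poly_def rmorph_sum; apply: eq_bigr => i _.
by rewrite -mul_polyC rmorphM /= horner_mx_C rmorphXn /= horner_mx_X -mulmxE mul_scalar_mx.
Qed.

Section Krylov.
Variables (F : fieldType) (n : nat) (w : 'rV[F]_n) (X : 'M[F]_n).

Definition krylov k : 'M_(k, n) := \matrix_(j < k) (w *m X ^+ j).

Lemma krylov_mem j k : (j < k)%N -> (w *m X ^+ j <= krylov k)%MS.
Proof. by move=> jk; apply: (eq_row_sub (Ordinal jk)); rewrite rowK. Qed.

Lemma krylovS i j : (i <= j)%N -> (krylov i <= krylov j)%MS.
Proof.
move=> ij; apply/row_subP => l; rewrite rowK krylov_mem //.
exact: leq_trans (ltn_ord l) ij.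
Qed.

Lemma krylovMX k : (krylov k *m X <= krylov k.+1)%MS.
Proof.
apply/row_subP => l; rewrite row_mul rowK -mulmxA.
have -> : X ^+ l *m X = X ^+ l.+1 by rewrite exprSr.
by rewrite krylov_mem ?ltnS.
Qed.

End Krylov.

(* By Cayley-Hamilton, w X^n is a combination of the w X^j with j < n. *)
Lemma krylov_stable (F : fieldType) n (w : 'rV[F]_n) (X : 'M_n) :
  stablemx (krylov w X n) X.
Proof.
case: n w X => [|m] v A /=; first by rewrite thinmx0 sub0mx.
apply/row_subP => l; rewrite row_mul rowK -mulmxA -[A ^+ l *m A]/(A ^+ l * A) -exprSr.
case: (ltnP l.+1 m.+1) => [|lm]; first exact: krylov_mem.
have -> : l = m :> nat by apply/eqP; rewrite eqn_leq -ltnS ltn_ord -ltnS.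
have lead1 : (char_poly A)`_m.+1 = 1.
  by have /monicP := char_poly_monic A; rewrite lead_coefE size_char_poly.
have := Cayley_Hamilton A; rewrite horner_mx_sum size_char_poly big_ord_recr /=.
rewrite lead1 scale1r addrC => /eqP; rewrite addr_eq0 => /eqP ->.
rewrite mulmxN -scaleN1r scalemx_sub // mulmx_sumr summx_sub // => i _.
by rewrite -scalemxAr scalemx_sub // krylov_mem.
Qed.

Section AdjointMatrix.
Variables (F : fieldType) (V : vectType F) (br : V -> V -> V).
Hypothesis br_bilin : bilinear_op br.

Definition ad_mx x : 'M[F]_(dim V) := lin1_mx (fun r => v2r (br x (r2v r))).

Lemma mul_ad_mx x v : v2r v *m ad_mx x = v2r (br x v).
Proof.
have adL : linear (fun r : 'rV_(dim V) => v2r (br x (r2v r))).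
  by move=> a r s; rewrite /= linearP (bilin_linearr br_bilin) linearP.
pose adl : {linear 'rV_(dim V) -> 'rV_(dim V)} :=
  HB.pack (fun r => v2r (br x (r2v r))) (GRing.isLinear.Build _ _ _ _ _ adL).
by rewrite [LHS](mul_rV_lin1 adl) /= v2rK.
Qed.

Lemma ad_mx_linear : linear ad_mx.
Proof.
move=> a x y; apply/eqP/mulmxP => r; rewrite -[r]r2vK mulmxDr -scalemxAr !mul_ad_mx.
by rewrite (bilin_linearl br_bilin) linearP.
Qed.

Lemma ad_mx_br : lie_bracket br -> forall x y,
  ad_mx (br x y) = ad_mx y *m ad_mx x - ad_mx x *m ad_mx y.
Proof.
move=> br_lie x y.
apply/eqP/mulmxP => r; rewrite -[r]r2vK mulmxBr !mulmxA !mul_ad_mx.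
by rewrite -linearB (lie_jacobi br_lie).
Qed.

End AdjointMatrix.

Section Representation.
Variables (F : fieldType) (V : vectType F) (n : nat) (rho : V -> 'M[F]_n).
Hypothesis rho_linear : linear rho.

Lemma common_eigenvector_weight (N : {vspace V}) (w : 'rV_n) :
  w != 0 -> {in N, forall u, exists c, w *m rho u = c *: w} ->
  exists2 lam : V -> F, scalar lam & {in N, forall u, w *m rho u = lam u *: w}.
Proof.
move=> /rV0Pn [i wi] weig; exists (fun u => (w *m rho u) 0 i / w 0 i).
  by move=> a x y; rewrite rho_linear mulmxDr -scalemxAr !mxE mulrDl mulrA.
by move=> u /weig [c wc]; rewrite wc mxE mulfK.
Qed.

Section WeightSpace.
Variables (W : 'M[F]_n) (N : {vspace V}) (lam : V -> F).
Hypothesis lam_scalar : scalar lam.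

Definition weight_space : 'M_n :=
  (W :&: \bigcap_(i < \dim N) kermx (rho (vbasis N)`_i - (lam (vbasis N)`_i)%:M))%MS.

Lemma weight_spaceP (v : 'rV_n) : (v <= weight_space)%MS <->
  (v <= W)%MS /\ {in N, forall y, v *m rho y = lam y *: v}.
Proof.
rewrite sub_capmx; split => [/andP [vW /sub_bigcapmxP vK] | [vW vN]].
  split => // y yN; rewrite (coord_vbasis yN) (linear_sumZ rho_linear) (linear_sumZ lam_scalar).
  rewrite mulmx_sumr scaler_suml.
  apply: eq_bigr => i _; have := vK i isT.
  rewrite sub_kermx mulmxBr mul_mx_scalar subr_eq0 => /eqP vbi.
  by rewrite -scalemxAr vbi scalerA.
rewrite vW; apply/sub_bigcapmxP => i _; rewrite sub_kermx mulmxBr mul_mx_scalar.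
by rewrite vN ?subrr // vbasis_mem // mem_nth ?size_tuple.
Qed.

End WeightSpace.

End Representation.

Section LieTheorem.
Variables (F : numClosedFieldType) (V : vectType F) (br : V -> V -> V) (n : nat).
Variable rho : V -> 'M[F]_n.
Hypotheses (br_bilin : bilinear_op br) (rho_linear : linear rho).
(* rho acts on row vectors, so it reverses products *)
Hypothesis rho_br : forall x y, rho (br x y) = rho y *m rho x - rho x *m rho y.

Section Invariance.
Variables (N : {vspace V}) (x : V) (w : 'rV[F]_n) (lam : V -> F).
Hypotheses (w_neq0 : w != 0) (w_weight : {in N, forall y, w *m rho y = lam y *: w}).
Hypothesis N_brx : {in N, forall y, br y x \in N}.

Local Notation X := (rho x).
Local Notation K := (krylov w (rho x)).

Lemma krylov_weight_filtration i y :
  y \in N -> (w *m X ^+ i *m (rho y - (lam y)%:M) <= K i)%MS.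
Proof.
elim: i y => [|i IH] y yN.
  by rewrite expr0 mulmx1 mulmxBr w_weight // mul_mx_scalar subrr sub0mx.
have -> : w *m X ^+ i.+1 *m (rho y - (lam y)%:M) =
    w *m X ^+ i *m (rho (br y x) - (lam (br y x))%:M) + lam (br y x) *: (w *m X ^+ i)
    + w *m X ^+ i *m (rho y - (lam y)%:M) *m X.
  rewrite rho_br exprSr -mulmxE !mulmxBr !mulmxBl !mulmxA !mul_mx_scalar.
  by rewrite -scalemxAl subrK addrA subrK.
rewrite !addmx_sub ?scalemx_sub ?krylov_mem //.
  exact: submx_trans (IH _ (N_brx yN)) (krylovS _ _ (leqnSn i)).
exact: submx_trans (submxMr _ (IH _ yN)) (krylovMX _ _ _).
Qed.

Lemma krylov_weight_stable y : y \in N -> stablemx (K n) (rho y).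
Proof.
move=> yN; apply/row_subP => l; rewrite row_mul rowK.
rewrite -[rho y](subrK (lam y)%:M) mulmxDr mul_mx_scalar addmx_sub ?scalemx_sub ?krylov_mem //.
exact: submx_trans (krylov_weight_filtration l yN) (krylovS _ _ (ltnW (ltn_ord l))).
Qed.

Lemma krylov_weight_nilpotent y i :
  y \in N -> K i *m (rho y - (lam y)%:M) ^+ i = 0.
Proof.
move=> yN; elim: i => [|i IH]; first by rewrite [K 0]flatmx0 mul0mx.
have : (K i.+1 *m (rho y - (lam y)%:M) <= K i)%MS.
  apply/row_subP => l; rewrite row_mul rowK.
  by apply: submx_trans (krylov_weight_filtration l yN) (krylovS _ _ _); rewrite -ltnS.
by case/submxP => D KD; rewrite exprS -mulmxE mulmxA KD -mulmxA IH mulmx0.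
Qed.

Lemma trace_krylov_weight y : y \in N ->
  \tr (conjmx (row_base (K n)) (rho y)) = lam y *+ \rank (K n).
Proof.
move=> yN; set B := row_base (K n); set Y := rho y - (lam y)%:M.
have BY : stablemx B Y.
  by rewrite stablemx_row_base stablemxD ?stablemxN ?stablemxC ?krylov_weight_stable.
have : \tr (conjmx B Y) = 0.
  apply: (@mxtrace_nilpotent _ _ _ n); rewrite conjmx_expmx ?row_base_free // /conjmx.
  have /submxP [D ->] : (B <= K n)%MS by rewrite eq_row_base.
  by rewrite -(mulmxA D) krylov_weight_nilpotent // mulmx0 mul0mx.
rewrite /Y /conjmx mulmxBr mulmxBl -/(conjmx B _) -[B *m _ *m _]/(conjmx B _).
rewrite conjmx_scalar ?row_base_free // raddfB /= mxtrace_scalar.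
by move/eqP; rewrite subr_eq0 => /eqP.
Qed.

Lemma weight_br_invariant y : y \in N -> lam (br y x) = 0.
Proof.
move=> yN; set B := row_base (K n).
have rankK : (0 < \rank (K n))%N.
  have n_gt0 : (0 < n)%N by apply: leq_trans _ (rank_leq_col w); rewrite lt0n mxrank_eq0.
  rewrite lt0n mxrank_eq0; apply: contraNneq w_neq0 => K0.
  by have := krylov_mem w X n_gt0; rewrite expr0 mulmx1 K0 submx0.
have BX : stablemx B X by rewrite stablemx_row_base krylov_stable.
have BY : stablemx B (rho y) by rewrite stablemx_row_base krylov_weight_stable.
have := trace_krylov_weight (N_brx yN); rewrite rho_br /conjmx mulmxBr mulmxBl.
rewrite -[B *m (_ *m X) *m _]/(conjmx B _) -[B *m (X *m _) *m _]/(conjmx B _).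
rewrite !conjmxM // raddfB /= mxtrace_mulC subrr => /esym/eqP.
by rewrite mulrn_eq0 eqn0Ngt rankK => /eqP.
Qed.

End Invariance.

Lemma weight_space_stable (W : 'M_n) (N : {vspace V}) (lam : V -> F) x (w : 'rV_n) :
  scalar lam -> stablemx W (rho x) ->
  w != 0 -> {in N, forall y, w *m rho y = lam y *: w} ->
  {in N, forall y, br y x \in N} -> stablemx (weight_space rho W N lam) (rho x).
Proof.
move=> lamS Wx wnz wlam N_brx; apply/row_subP => l; rewrite row_mul.
have /(weight_spaceP rho_linear W N lamS) [vW vN] := row_sub l (weight_space rho W N lam).
apply/(weight_spaceP rho_linear W N lamS); split => [|y yN].
  exact: submx_trans (submxMr _ vW) Wx.
rewrite -mulmxA; have -> : rho x *m rho y = rho y *m rho x + rho (br y x).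
  by rewrite rho_br addrC subrK.
rewrite mulmxDr mulmxA vN // vN ?N_brx //.
by rewrite (weight_br_invariant wnz wlam N_brx yN) scale0r addr0 -scalemxAl.
Qed.

Theorem lie_common_eigenvector (U : {vspace V}) (W : 'M[F]_n) :
  (derived_sub br U <= U)%VS -> (exists j, iter j (derived_sub br) U = 0%VS) ->
  W != 0 -> {in U, forall u, stablemx W (rho u)} ->
  exists w : 'rV_n, [/\ w != 0, (w <= W)%MS & {in U, forall u, exists c, w *m rho u = c *: w}].
Proof.
have [k] := ubnP (\dim U); elim: k U W => // k IHk U W dimU UU [j solU] Wnz WU.
have [-> | Unz] := eqVneq U 0%VS.
  exists (nz_row W); split; rewrite ?nz_row_eq0 ?nz_row_sub // => u.
  rewrite memv0 => /eqP ->; exists 0.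
  have /= := GRing.zmod_morphism_linear rho_linear 0 0; rewrite !subrr => ->.
  by rewrite mulmx0 scale0r.
have [e eU eD] := subvPn (derived_sub_proper br_bilin solU Unz).
have [N [DN NU eN UNe]] := exists_hyperplane UU eU eD.
have N_br y u : y \in N -> u \in U -> br y u \in N.
  by move=> yN uU; apply: (subvP DN); apply: mem_derived_sub => //; apply: (subvP NU).
have NN : (derived_sub br N <= N)%VS.
  by apply: derived_sub_min => y z yN zN; rewrite N_br // (subvP NU).
have solN : exists j, iter j (derived_sub br) N = 0%VS.
  by exists j; apply/eqP; rewrite -subv0 -solU iter_derived_subS.
have dimN : (\dim N < k)%N.
  rewrite -ltnS (leq_trans _ dimU) // ltnS (ltn_leqif (dimv_leqif_eq NU)).
  by apply: contraNneq eN => ->.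
have [w0 [w0nz w0W w0N]] := IHk N W dimN NN solN Wnz (fun y yN => WU y (subvP NU y yN)).
have [lam lamS w0lam] := common_eigenvector_weight rho_linear w0nz w0N.
have W'nz : weight_space rho W N lam != 0.
  apply: contraNneq w0nz => W'0.
  by have /(weight_spaceP rho_linear W N lamS) := conj w0W w0lam; rewrite W'0 submx0.
have [v [vnz vW' [a va]]] := stablemx_eigenvector W'nz
  (weight_space_stable lamS (WU e eU) w0nz w0lam (fun y yN => N_br y e yN eU)).
have /(weight_spaceP rho_linear W N lamS) [vW vN] := vW'.
exists v; split => // u uU.
have /memv_addP [y yN [_ /vlineP [c ->] ->]] := subvP UNe u uU.
exists (lam y + c * a).
by rewrite [y + _]addrC rho_linear mulmxDr -scalemxAr va vN // scalerA -scalerDl addrC.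
Qed.

End LieTheorem.

Lemma CPA_structure_rank_one (F : fieldType) (V : vectType F) (br : V -> V -> V)
    (phi : V -> F) (z : V) (kap : F) :
  lie_bracket br -> scalar phi -> (forall x y, phi (br x y) = 0) ->
  (forall u, br u z = (kap * phi u) *: z) ->
  CPA_structure br (fun x y => (phi x * phi y) *: z).
Proof.
move=> br_lie phiS phi_br brz; have bl := lie_bilin br_lie.
have phiZ a x : phi (a *: x) = a * phi x := GRing.scalable_linear phiS a x.
split.
- by split=> a x y t; rewrite phiS !scalerA -scalerDl; congr (_ *: _); ring.
- by move=> x y; rewrite mulrC.
- move=> x y t; rewrite phi_br mul0r scale0r !phiZ -scalerBl.
  by apply/esym/eqP; rewrite scaler_eq0; apply/orP; left; apply/eqP; ring.
- move=> x y t; rewrite phi_br mulr0 scale0r (bilinZl bl) (bilinZr bl).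
  rewrite !(lie_anti br_lie z) !brz -!scaleNr !scalerA -scalerDl.
  by apply/esym/eqP; rewrite scaler_eq0; apply/orP; left; apply/eqP; ring.
Qed.

Lemma nontrivial_CPA_of_eigenvector (F : fieldType) (V : vectType F)
    (br : V -> V -> V) (z : V) (lam : V -> F) :
  lie_bracket br -> ~~ (fullv <= derived_sub br fullv)%VS -> z != 0 -> scalar lam ->
  (forall u, br u z = lam u *: z) ->
  exists p : V -> V -> V, CPA_structure br p /\ nontrivial_product p.
Proof.
move=> br_lie Dfull znz lamS brz; have bl := lie_bilin br_lie.
suff [phi [phiS phi_br [kap brz'] [x0 phix0]]] : exists phi : V -> F,
    [/\ scalar phi, forall x y, phi (br x y) = 0,
        exists kap, forall u, br u z = (kap * phi u) *: z & exists x0, phi x0 != 0].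
  exists (fun x y => (phi x * phi y) *: z); split.
    exact: CPA_structure_rank_one brz'.
  by exists x0, x0; rewrite scaler_eq0 negb_or znz mulf_neq0.
case: (classic (forall x, lam x = 0)) => [lam0 | /not_all_ex_not [x0 /eqP lamx0]].
  have [e _ eD] := subvPn Dfull; have [phi [phiS phiD phie]] := exists_linear_form eD.
  exists phi; split => //; last by exists e.
    by move=> x y; rewrite phiD // mem_derived_sub ?memvf.
  by exists 0 => u; rewrite brz lam0 mul0r.
exists lam; split => //; last by exists x0.
  move=> x y; have := brz (br x y).
  rewrite (lie_jacobi br_lie) !brz !(bilinZr bl) !brz !scalerA [lam y * _]mulrC subrr.
  by move/esym/eqP; rewrite scaler_eq0 (negbTE znz) orbF => /eqP.
by exists 1 => u; rewrite mul1r brz.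
Qed.

Theorem corollary3p9 (R : realType) (V : vectType R[i]) (br : V -> V -> V) :
  lie_bracket br -> solvable_lie br -> (0 < \dim (fullv : {vspace V}))%N ->
  exists p : V -> V -> V, CPA_structure br p /\ nontrivial_product p.
Proof.
move=> br_lie [j solV] dimV; have bl := lie_bilin br_lie.
have Vnz : (fullv : {vspace V}) != 0%VS by rewrite -dimv_eq0 -lt0n.
have id_nz : (1%:M : 'M[R[i]]_(dim V)) != 0 by rewrite -mxrank_eq0 mxrank1 -dimvf -lt0n.
have [w [wnz _ weig]] := lie_common_eigenvector bl (ad_mx_linear bl) (ad_mx_br bl br_lie)
  (subvf _) (ex_intro _ j solV) id_nz (fun u _ => submx1 _).
have [lam lamS wlam] := common_eigenvector_weight (ad_mx_linear bl) wnz weig.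
apply: (nontrivial_CPA_of_eigenvector (z := r2v w) br_lie
  (derived_sub_proper bl solV Vnz) _ lamS).
  by rewrite -(inj_eq (@v2r_inj _ V)) r2vK linear0.
by move=> u; apply: v2r_inj; rewrite -(mul_ad_mx bl) linearZ /= r2vK wlam ?memvf.
Qed.
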